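(* Let $K, M, R, T \in \mathbb{N}$, put $D = KM$, and let ${\bf g} \in \mathbb{C}^D$ be a prototype filter with frequency-domain version ${\bf g}_f = \sqrt{D}\,{\bf W}_D {\bf g}$. Let ${\bf A} \in \mathbb{C}^{D\times D}$ be the GFDM matrix $$ {\bf A}=[{\bf g}_{0,0}\ \cdots\ {\bf g}_{K-1,0}\ \ {\bf g}_{0,1}\ \cdots\ {\bf g}_{K-1,1}\ \cdots\ {\bf g}_{K-1,M-1}], $$ where $[{\bf g}_{k,m}]_n=[{\bf g}]_{\langle n-mK\rangle_D}\,e^{j2\pi kn/K}$ for $n=0,\dots,D-1$, $k=0,\dots,K-1$, $m=0,\dots,M-1$. Here $\langle\cdot\rangle_D$ denotes reduction modulo $D$. Column $kM'$ ordering is as displayed: $k$ varies fastest. For $r=1,\dots,R$ and $t=1,\dots,T$, let ${\bf H}_{r,t}\in\mathbb{C}^{D\times D}$ be arbitrary circulant matrices. Define the $RD\times TD$ block matrix $$ \tilde{\bf H}=\begin{bmatrix}{\bf H}_{1,1}{\bf A} & \cdots & {\bf H}_{1,T}{\bf A}\\ \vdots & \ddots & \vdots\\ {\bf H}_{R,1}{\bf A} & \cdots & {\bf H}_{R,T}{\bf A}\end{bmatrix}. $$ Assume ${\bf g}_f$ has at most $M$ consecutive (cyclically) nonzero entries. Precisely, assume there exist ${\bf g}_1\in\mathbb{C}^M$ and an integer $l$ with $0\le l<D$ such that $$ {\bf g}_f = {\bf C}_D^{\,l}\begin{bmatrix}{\bf g}_1^T & {\bf 0}^T_{(K-1)M}\end{bmatrix}^T.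 $$ Then there exist matrices ${\bf F}_0,\dots,{\bf F}_{K-1}\in\mathbb{C}^{MR\times MT}$ such that $$ \tilde{\bf H}={\bf U}^H\,\mathrm{blkdiag}(\{{\bf F}_k\}_{k=0}^{K-1})\,{\bf P}, $$ where $$ {\bf U}=({\bf S}_{K,R}\otimes{\bf I}_M)({\bf I}_R\otimes {\bf C}_D^{-l}{\bf W}_D) $$ and $$ {\bf P}=({\bf S}_{K,T}\otimes{\bf I}_M)({\bf I}_T\otimes{\bf S}_{K,M}). $$
   Context: Matrix and vector entries are indexed from zero. ${\bf W}_p$ is the normalized $p$-point DFT matrix, with $[{\bf W}_p]_{m,n}=e^{-j2\pi mn/p}/\sqrt{p}$. ${\bf I}_p$ is the $p\times p$ identity matrix, and ${\bf 0}_q$ is the $q\times 1$ zero vector. $\otimes$ denotes the Kronecker product. $\mathrm{blkdiag}(\{{\bf F}_k\}_{k=0}^{K-1})$ is the block-diagonal matrix whose $k$th diagonal block is ${\bf F}_k$. For $A\in\mathbb{N}$, ${\bf C}_A$ is the $A\times A$ cyclic-shift permutation matrix $$ {\bf C}_A=\begin{bmatrix}{\bf 0}_{A-1}^T & 1\\ {\bf I}_{A-1} & {\bf 0}_{A-1}\end{bmatrix}. $$ The paper writes this matrix as ${\bf \Pi}_A$. For $A,B\in\mathbb{N}$, ${\bf S}_{A,B}$ is the $AB\times AB$ permutation matrix defined by $[{\bf S}_{A,B}]_{mB+p,\,qA+n}=\delta_{mn}\delta_{pq}$ for all $m,n\in\{0,\dots,A-1\}$ and $p,q\in\{0,\dots,B-1\}$,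 where $\delta$ is the Kronecker delta. The paper writes this matrix as ${\bf \Pi}_{AB}$; in the theorem it appears as ${\bf \Pi}_{KR}$, ${\bf \Pi}_{KT}$, ${\bf \Pi}_{KM}$, with $(A,B)=(K,R),(K,T),(K,M)$ respectively. Interpretation (not needed for the statement): ${\bf H}_{r,t}$ models the cyclic-prefix-equivalent channel from transmit antenna $t$ to receive antenna $r$ in a MIMO-GFDM system. *)

From mathcomp Require Import all_boot all_algebra.
From mathcomp Require Import reals trigo.
From mathcomp Require Import complex mxtens.

Set Implicit Arguments.
Unset Strict Implicit.
Unset Printing Implicit Defensive.

Import GRing.Theory Num.Theory.
Local Open Scope ring_scope.

Section GFDM.
Variable R : realType.
Local Notation C := R[i].

Definition expj (x : R) : C := Complex (cos x) (sin x).

Definition DFT (p : nat) : 'M[C]_p :=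
  \matrix_(m < p, n < p)
    (expj (- (2 * pi * (m * n)%:R / p%:R)) / (Num.sqrt (p%:R : R))%:C%C).

(* cyclic shift permutation matrix C_A (the paper's Pi_A):
   [C_A]_{0,A-1} = 1 and [C_A]_{i,i-1} = 1 for i >= 1 *)
Definition cshift (A : nat) : 'M[C]_A :=
  \matrix_(i < A, j < A) ((val i == (j.+1 %% A)%N)%:R).

(* permutation matrix S_{A,B} (the paper's Pi_{AB}):
   [S]_{mB+p, qA+n} = delta_{mn} delta_{pq} *)
Definition Sperm (A B : nat) : 'M[C]_(A * B) :=
  \matrix_(i < A * B, j < A * B)
    (((i %/ B == j %% A)%N && (i %% B == j %/ A)%N)%:R).

Lemma ord_pos (D : nat) (i : 'I_D) : (0 < D)%N.
Proof. by apply: leq_ltn_trans (ltn_ord i); exact: leq0n. Qed.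

(* x mod D as an element of 'I_D (D > 0 witnessed by some i : 'I_D) *)
Definition ordmod (D : nat) (i : 'I_D) (x : nat) : 'I_D :=
  Ordinal (ltn_pmod x (ord_pos i)).

(* GFDM matrix A: column c = m K + k is g_{k,m},
   [g_{k,m}]_n = [g]_{<n - mK>_D} e^{j 2 pi k n / K}, D = K M *)
Definition gfdm (K M : nat) (g : 'cV[C]_(K * M)) : 'M[C]_(K * M) :=
  \matrix_(n < K * M, c < K * M)
    (g (ordmod n (n + K * M - (c %/ K) * K)) 0 *
     expj (2 * pi * ((c %% K) * n)%:R / K%:R)).

Definition circulant (D : nat) (H : 'M[C]_D) : Prop :=
  exists c : 'cV[C]_D, forall i j : 'I_D, H i j = c (ordmod i (i + D - j)) 0.

Definition Htilde (Rn Tn D : nat) (H : 'I_Rn -> 'I_Tn -> 'M[C]_D)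
  (A : 'M[C]_D) : 'M[C]_(Rn * D, Tn * D) :=
  \matrix_(i < Rn * D, j < Tn * D)
    ((H (mxtens_unindex i).1 (mxtens_unindex j).1 *m A)
       (mxtens_unindex i).2 (mxtens_unindex j).2).

Definition blkdiag (K p q : nat) (F : 'I_K -> 'M[C]_(p, q)) : 'M[C]_(K * p, K * q) :=
  \matrix_(i < K * p, j < K * q)
    (if (mxtens_unindex i).1 == (mxtens_unindex j).1
     then F (mxtens_unindex i).1 (mxtens_unindex i).2 (mxtens_unindex j).2
     else 0).

Definition pad (K M : nat) (g1 : 'cV[C]_M) : 'cV[C]_(K * M) :=
  \col_(i < K * M)
    (if (insub (val i) : option 'I_M) is Some j then g1 j 0 else 0).

Definition adjmx (m n : nat) (A : 'M[C]_(m, n)) : 'M[C]_(n, m) :=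
  (map_mx (fun x : C => x^*) A)^T.

Lemma eqKRM (K Rn M : nat) : (K * Rn * M = Rn * (K * M))%N.
Proof. by rewrite mulnAC mulnC mulnA. Qed.

Lemma eqKMR (K M Rn : nat) : (K * (M * Rn) = Rn * (K * M))%N.
Proof. by rewrite mulnA mulnC. Qed.

Definition Umat (K M Rn l : nat) : 'M[C]_(Rn * (K * M)) :=
  castmx (eqKRM K Rn M, eqKRM K Rn M) (Sperm K Rn *t (1%:M : 'M[C]_M))
  *m ((1%:M : 'M[C]_Rn) *t (invmx (cshift (K * M) ^+ l) *m DFT (K * M))).

Definition Pmat (K M Tn : nat) : 'M[C]_(Tn * (K * M)) :=
  castmx (eqKRM K Tn M, eqKRM K Tn M) (Sperm K Tn *t (1%:M : 'M[C]_M))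
  *m ((1%:M : 'M[C]_Tn) *t Sperm K M).

End GFDM.

(* The DFT matrix [W] diagonalises every circulant [H], so it suffices to
   understand [W A].  Column [m K + k] of the GFDM matrix [A] is the prototype
   [g] cyclically delayed by [m K] and modulated by [e^{j 2 pi k n / K}], i.e.
   by the [k M]-th power of a primitive [D]-th root of unity; hence the same
   column of [W A] is, up to a phase, [W g] cyclically shifted by [k M].  The
   hypothesis says that [W g] vanishes outside the [M] cyclically consecutive
   frequencies starting at [l], so the entry of [C^{-l} W H A] in row [f] and
   column [m K + k] vanishes unless [f / M = k].  The permutations in [U] and
   [P] just sort rows and columns by this band index, which makes
   [U H~ P^H] block diagonal; as [U] and [P] are unitary, this is the
   claimed factorisation. *)

From mathcomp Require Import all_boot all_algebra.
From mathcomp Require Import reals trigo.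
From mathcomp Require Import complex mxtens.
From mathcomp Require Import ring lra zify.

Set Implicit Arguments.
Unset Strict Implicit.
Unset Printing Implicit Defensive.

Import order.Order.TTheory GRing.Theory Num.Theory.
Local Open Scope ring_scope.

Lemma Posz_modn (x D : nat) : ((x %% D)%N)%:Z = x%:Z - D%:Z * (x %/ D)%N%:Z.
Proof. by rewrite {2}(divn_eq x D) PoszD PoszM; ring. Qed.

Lemma addn_subn_modn (D m a : nat) : (m < D)%N -> (a <= D)%N ->
  (((m + a) %% D + D - a) %% D = m)%N.
Proof.
by move=> mD aD; rewrite -addnBA // modnDml -addnA subnKC // modnDr modn_small.
Qed.

Lemma iter_ordS_val n l (i : 'I_n) : val (iter l (@ordS n) i) = ((i + l) %% n)%N.
Proof.
elim: l => [|l IH]; first by rewrite addn0 modn_small.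
by rewrite iterS /= IH -addn1 modnDml addn1 addnS.
Qed.

Lemma ordmod_addn_inj D a : injective (fun m : 'I_D => ordmod m (m + a)).
Proof.
move=> m1 m2 /(congr1 val) /= /eqP; rewrite eqn_modDr => /eqP.
by rewrite !modn_small // => /val_inj.
Qed.

Lemma leq_offband_modn K M f k : (0 < M)%N -> (f < K * M)%N -> (k < K)%N ->
  (f %/ M != k)%N -> (M <= (f + K * M - k * M) %% (K * M))%N.
Proof.
move=> M_gt0 f_lt k_lt f_neq_k.
have q_lt : (f %/ M < K)%N by rewrite ltn_divLR // mulnC.
rewrite -divn_gt0 // -modn_divl -addnBA ?leq_mul2r ?(ltnW k_lt) ?orbT //.
rewrite -mulnBl divnDMl //; move: f_neq_k; set q := (f %/ M)%N => q_neq_k.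
have [q_lt_k|k_lt_q|/eqP] := ltngtP q k; last by rewrite (negbTE q_neq_k).
- by rewrite modn_small; lia.
- by rewrite (_ : (q + (K - k) = (q - k) + K)%N) ?modnDr ?modn_small; lia.
Qed.

Lemma Sperm_band_index K M Rn q b : (0 < M)%N -> (q < K * Rn)%N -> (b < M)%N ->
  ((((q %% Rn) * K + q %/ Rn) * M + b) %% (K * M) %/ M = q %/ Rn)%N.
Proof.
move=> M_gt0 q_lt b_lt; have Rn_gt0 : (0 < Rn)%N by case: Rn q_lt; rewrite ?muln0.
rewrite -modn_divl divnMDl // (divn_small b_lt) addn0 modnMDl modn_small //.
by rewrite ltn_divLR.
Qed.

Lemma sum_mxtens_index (V : nmodType) m n (F : 'I_(m * n) -> V) :
  \sum_(k < m * n) F k = \sum_(a < m) \sum_(b < n) F (mxtens_index (a, b)).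
Proof.
rewrite pair_big (reindex (@mxtens_unindex m n)) /=.
  by apply: eq_bigr => k _; rewrite mxtens_unindexK.
by exists (@mxtens_index m n) => k _; rewrite (mxtens_indexK, mxtens_unindexK).
Qed.

Lemma geometric_sum_root (C : fieldType) (z : C) n :
  z ^+ n = 1 -> z != 1 -> \sum_(k < n) z ^+ k = 0.
Proof.
move=> zn z_neq1; have := subrX1 z n; rewrite zn subrr => /esym/eqP.
by rewrite mulf_eq0 subr_eq0 (negbTE z_neq1) => /eqP.
Qed.

Section UnitaryTensor.
Local Open Scope sesquilinear_scope.
Variable C : numClosedFieldType.

Lemma tensmx11 m n : (1%:M : 'M[C]_m) *t (1%:M : 'M_n) = 1%:M.
Proof.
apply/matrixP=> i j; case: (mxtens_indexP i) => a b; case: (mxtens_indexP j) => c d.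
rewrite tensmxE !mxE -natrM mulnb (inj_eq (can_inj (@mxtens_indexK _ _))).
by rewrite xpair_eqE.
Qed.

Lemma trmxC_tens m n p q (A : 'M[C]_(m, n)) (B : 'M[C]_(p, q)) :
  (A *t B) ^t* = A ^t* *t B ^t*.
Proof. by rewrite trmx_tens map_mxT. Qed.

Lemma trmxC_X n (A : 'M[C]_n) l : (A ^+ l) ^t* = (A ^t*) ^+ l.
Proof.
elim: l => [|l IH]; first by rewrite !expr0 trmx1 map_mx1.
by rewrite exprS exprSr -!mulmxE trmx_mul map_mxM IH.
Qed.

Lemma mulmx_trCE m n p (A : 'M[C]_(m, n)) (B : 'M[C]_(p, n)) i j :
  (A *m B ^t*) i j = \sum_k A i k * (B j k)^*.
Proof. by rewrite mxE; apply: eq_bigr => k _; rewrite !mxE. Qed.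

Lemma unitarymx1 n : (1%:M : 'M[C]_n) \is unitarymx.
Proof. by apply/unitarymxP; rewrite trmx1 map_mx1 mulmx1. Qed.

Lemma unitarymx_tens m n p q (A : 'M[C]_(m, n)) (B : 'M[C]_(p, q)) :
  A \is unitarymx -> B \is unitarymx -> A *t B \is unitarymx.
Proof.
move=> /unitarymxP uA /unitarymxP uB; apply/unitarymxP.
by rewrite trmxC_tens tensmx_mul uA uB tensmx11.
Qed.

Lemma unitarymx_cast m n m' n' (em : m = m') (en : n = n') (A : 'M[C]_(m, n)) :
  A \is unitarymx -> castmx (em, en) A \is unitarymx.
Proof. by case: m' / em; case: n' / en; rewrite castmx_id. Qed.

Lemma unitarymxX n (A : 'M[C]_n) l : A \is unitarymx -> A ^+ l \is unitarymx.
Proof.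
move=> uA; elim: l => [|l IH]; first by rewrite expr0 unitarymx1.
by rewrite exprS -mulmxE mul_unitarymx.
Qed.

Lemma unitarymx_sandwichK m n (U : 'M[C]_m) (P : 'M[C]_n) (Y : 'M[C]_(m, n)) :
  U \is unitarymx -> P \is unitarymx -> U ^t* *m (U *m Y *m P ^t*) *m P = Y.
Proof. by move=> /unitarymxP/mulmx1C UtU uP; rewrite !mulmxA UtU mul1mx mulmxKtV. Qed.

End UnitaryTensor.

Section RowSelection.
Local Open Scope sesquilinear_scope.
Variable C : numClosedFieldType.

Definition is_rowsel m n (S : 'M[C]_(m, n)) (p : 'I_m -> 'I_n) :=
  forall i j, S i j = (p i == j)%:R.

Lemma rowsel_mulmx m n k (S : 'M[C]_(m, n)) p (Y : 'M[C]_(n, k)) i j :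
  is_rowsel S p -> (S *m Y) i j = Y (p i) j.
Proof.
move=> hS; rewrite mxE (bigD1 (p i)) //= hS eqxx mul1r big1 ?addr0 // => k' hk.
by rewrite hS eq_sym (negbTE hk) mul0r.
Qed.

Lemma mulmx_trC_rowsel m n k (S : 'M[C]_(m, n)) p (Y : 'M[C]_(k, n)) i j :
  is_rowsel S p -> (Y *m S ^t*) i j = Y i (p j).
Proof.
move=> hS; rewrite mxE (bigD1 (p j)) //= !mxE hS eqxx rmorph1 mulr1.
rewrite big1 ?addr0 // => k' hk.
by rewrite !mxE hS eq_sym (negbTE hk) rmorph0 mulr0.
Qed.

Lemma rowsel1 n : is_rowsel (1%:M : 'M[C]_n) id.
Proof. by move=> i j; rewrite mxE. Qed.

Lemma rowsel_mul m n k (S1 : 'M[C]_(m, n)) (S2 : 'M[C]_(n, k)) p1 p2 :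
  is_rowsel S1 p1 -> is_rowsel S2 p2 -> is_rowsel (S1 *m S2) (p2 \o p1).
Proof. by move=> h1 h2 i j; rewrite (rowsel_mulmx _ _ _ h1) h2. Qed.

Lemma rowselX n (S : 'M[C]_n) p l : is_rowsel S p -> is_rowsel (S ^+ l) (iter l p).
Proof.
move=> hS; elim: l => [|l IH]; first by rewrite expr0; exact: rowsel1.
by rewrite exprS -mulmxE => i j; rewrite (rowsel_mul hS IH) iterSr.
Qed.

Lemma rowsel_tens m n p q (S : 'M[C]_(m, n)) (T : 'M[C]_(p, q)) f g :
  is_rowsel S f -> is_rowsel T g ->
  is_rowsel (S *t T)
    (fun i => mxtens_index (f (mxtens_unindex i).1, g (mxtens_unindex i).2)).
Proof.
move=> hS hT i j; case: (mxtens_indexP i) => a b; case: (mxtens_indexP j) => c d.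
rewrite tensmxE hS hT mxtens_indexK -natrM mulnb.
by rewrite (inj_eq (can_inj (@mxtens_indexK _ _))) xpair_eqE.
Qed.

Lemma rowsel_cast m n m' n' (em : m = m') (en : n = n') (S : 'M[C]_(m, n)) f :
  is_rowsel S f ->
  is_rowsel (castmx (em, en) S) (fun i => cast_ord en (f (cast_ord (esym em) i))).
Proof. by move=> hS i j; rewrite castmxE hS -!val_eqE. Qed.

Lemma rowsel_unitary n (S : 'M[C]_n) p : is_rowsel S p -> injective p ->
  S \is unitarymx.
Proof.
move=> hS p_inj; apply/unitarymxP/matrixP => i j.
by rewrite (mulmx_trC_rowsel _ _ _ hS) hS !mxE (inj_eq p_inj).
Qed.

End RowSelection.

Section PermutationMatrices.
Local Open Scope sesquilinear_scope.
Variable R : realType.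
Local Notation C := R[i].

Lemma adjmx_trC m n (A : 'M[C]_(m, n)) : adjmx A = A ^t*.
Proof. by rewrite /adjmx map_trmx. Qed.

Lemma Sperm_index_proof A B (i : 'I_(A * B)) : ((i %% B) * A + i %/ B < A * B)%N.
Proof.
have := mxtens_index_proof (Ordinal (mxtens_index_proof2 i),
                            Ordinal (mxtens_index_proof1 i)).
by rewrite [(B * A)%N]mulnC.
Qed.

Definition Sperm_index A B (i : 'I_(A * B)) : 'I_(A * B) :=
  Ordinal (Sperm_index_proof i).

Lemma Sperm_rowsel A B : is_rowsel (Sperm R A B) (@Sperm_index A B).
Proof.
move=> i j; rewrite mxE -val_eqE /= [in RHS](divn_eq j A).
rewrite eq_addl_mul ?mxtens_index_proof1 ?ltn_mod ?xpair_eqE 1?andbC //.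
by case: A i j => [|A] // [] //.
Qed.

Lemma Sperm_index_inj A B : injective (@Sperm_index A B).
Proof.
move=> i j /(congr1 val) /= /eqP.
rewrite eq_addl_mul ?mxtens_index_proof1 // xpair_eqE => /andP[/eqP e1 /eqP e2].
by apply: val_inj; rewrite /= (divn_eq i B) (divn_eq j B) e1 e2.
Qed.

Lemma Sperm_unitary A B : Sperm R A B \is unitarymx.
Proof. exact: rowsel_unitary (@Sperm_rowsel A B) (@Sperm_index_inj A B). Qed.

Lemma cshift_trC_rowsel n : is_rowsel ((cshift R n) ^t*) (@ordS n).
Proof. by move=> i j; rewrite !mxE rmorph_nat -val_eqE /= eq_sym. Qed.

Lemma cshift_unitary n : cshift R n \is unitarymx.
Proof.
by rewrite -trmxC_unitary (rowsel_unitary (@cshift_trC_rowsel n) (@ordS_inj n)).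
Qed.

Lemma invmx_cshiftX_rowsel n l :
  is_rowsel (invmx (cshift R n ^+ l)) (iter l (@ordS n)).
Proof.
rewrite invmx_unitary ?unitarymxX ?cshift_unitary // trmxC_X.
exact/rowselX/cshift_trC_rowsel.
Qed.

End PermutationMatrices.

Section RootsOfUnity.
Variable R : realType.
Local Notation C := R[i].

Lemma expjD (x y : R) : expj (x + y) = expj x * expj y.
Proof.
rewrite /expj cosD sinD; apply/eqP; rewrite eq_complex /=.
by apply/andP; split; apply/eqP; ring.
Qed.

Lemma expj0 : expj 0 = 1 :> C.
Proof. by rewrite /expj cos0 sin0. Qed.

Lemma expj_neq0 (x : R) : expj x != 0.
Proof.
apply/eqP => e; have := expjD x (- x).
by rewrite subrr expj0 e mul0r => /eqP; rewrite oner_eq0.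
Qed.

Lemma expjN (x : R) : expj (- x) = (expj x)^-1.
Proof.
by apply: (mulfI (expj_neq0 x)); rewrite -expjD subrr expj0 mulfV ?expj_neq0.
Qed.

Lemma expj_mulrn (x : R) n : expj (x *+ n) = expj x ^+ n.
Proof. by elim: n => [|n IH]; rewrite ?expj0 // mulrS exprS expjD IH. Qed.

Lemma conj_expj (x : R) : (expj x)^* = expj (- x).
Proof. by rewrite /expj cosN sinN. Qed.

Variable D : nat.

Definition omega : C := expj (2 * pi / D%:R).

Lemma expj_omega (a : nat) : expj (2 * pi * a%:R / D%:R) = omega ^+ a.
Proof. by rewrite mulrAC mulr_natr expj_mulrn. Qed.

Lemma omegaD : omega ^+ D = 1.
Proof.
have [->|D_gt0] := posnP D; first exact: expr0.
rewrite -expj_omega -mulrA mulfV ?pnatr_eq0 -?lt0n // mulr1.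
by rewrite /expj mulr_natl cos2pi sin2pi.
Qed.

Lemma omega_neq0 : omega != 0.
Proof. exact: expj_neq0. Qed.

Lemma omegaX_neq1 e : (0 < e < D)%N -> omega ^+ e != 1.
Proof.
case/andP=> e_gt0 e_ltD; set y : R := pi * e%:R / D%:R.
have D_gt0 : (0 < D)%N := ltn_trans e_gt0 e_ltD.
have D_neq0 : (D%:R : R) != 0 by rewrite pnatr_eq0 -lt0n.
have sin_y_gt0 : 0 < sin y.
  apply: sin_gt0_pi; rewrite divr_gt0 ?mulr_gt0 ?pi_gt0 ?ltr0n //=.
  by rewrite ltr_pdivrMr ?ltr0n // ltr_pM2l ?pi_gt0 ?ltr_nat.
rewrite -expj_omega (_ : 2 * pi * e%:R / D%:R = y *+ 2); last first.
  by rewrite /y mulr2n; field.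
apply/eqP => /(congr1 (@complex.Re _)) /=.
rewrite cos_mulr2n cos2sin2 !mulr2n => h.
have : sin y ^+ 2 = 0 by lra.
by move/eqP; rewrite expf_eq0 /= gt_eqF.
Qed.

Definition twiddle (z : int) : C := omega ^ z.

Lemma twiddleD a b : twiddle (a + b) = twiddle a * twiddle b.
Proof. by rewrite /twiddle expfzDr // omega_neq0. Qed.

Lemma twiddle0 : twiddle 0 = 1.
Proof. exact: expr0z. Qed.

Lemma twiddleMn (z : int) (n : nat) : twiddle (z * n%:Z) = twiddle z ^+ n.
Proof. by rewrite /twiddle -exprz_exp. Qed.

Lemma twiddle_modD a b w : a = b + D%:Z * w -> twiddle a = twiddle b.
Proof.
move=> ->; rewrite twiddleD /twiddle -exprz_exp.
by rewrite (_ : omega ^ D%:Z = 1) ?exp1rz ?mulr1 //; exact: omegaD.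
Qed.

Lemma conj_twiddle z : (twiddle z)^* = twiddle (- z).
Proof.
have conj_omega : omega^* = omega^-1 by rewrite conj_expj expjN.
by rewrite /twiddle rmorphXz ?unitfE ?omega_neq0 // -exprz_inv -conj_omega.
Qed.

Lemma expj_twiddle (a : nat) : expj (- (2 * pi * a%:R / D%:R)) = twiddle (- a%:Z).
Proof. by rewrite expjN expj_omega /twiddle -invr_expz. Qed.

Definition sqrtD : C := (Num.sqrt (D%:R : R))%:C%C.

Lemma conj_sqrtD : sqrtD^* = sqrtD.
Proof. by rewrite conj_Creal // complex_real. Qed.

Lemma sqrtD_sqr : sqrtD * sqrtD = D%:R.
Proof. by rewrite -rmorphM /= -expr2 sqr_sqrtr ?ler0n // rmorph_nat. Qed.

Lemma sqrtD_neq0 : (0 < D)%N -> sqrtD != 0.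
Proof.
move=> D_gt0; apply: contra_eq_neq sqrtD_sqr => ->.
by rewrite mul0r eq_sym pnatr_eq0 -lt0n.
Qed.

Lemma DFTE (f n : 'I_D) : DFT R D f n = twiddle (- (f * n)%N%:Z) / sqrtD.
Proof. by rewrite mxE expj_twiddle. Qed.

End RootsOfUnity.

Arguments twiddle_modD {R D a b} w.

Section DFT.
Local Open Scope sesquilinear_scope.
Variable R : realType.
Local Notation C := R[i].
Variable D : nat.
Hypothesis D_gt0 : (0 < D)%N.
Local Notation twiddle := (twiddle R D).
Local Notation W := (DFT R D).

Lemma DFT_unitary : W \is unitarymx.
Proof.
have conjC_div (x y : C) : (x / y)^* = x^* / y^* by rewrite fmorph_div.
apply/unitarymxP/matrixP => f f'; rewrite mulmx_trCE mxE.
under eq_bigr => n _ do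
  rewrite !DFTE conjC_div conj_twiddle conj_sqrtD opprK.
have -> : \sum_(n < D)
      twiddle (- (f * n)%N%:Z) / sqrtD R D * (twiddle (f' * n)%N%:Z / sqrtD R D)
    = (\sum_(n < D) twiddle (f'%:Z - f%:Z) ^+ n) / D%:R.
  rewrite -sqrtD_sqr // mulr_suml; apply: eq_bigr => n _.
  rewrite -twiddleMn (_ : (f'%:Z - f%:Z) * n%:Z = - (f * n)%N%:Z + (f' * n)%N%:Z).
    by rewrite twiddleD invfM mulrACA.
  by rewrite !PoszM; ring.
have [<-|f_neq_f'] := eqVneq f f'.
  under eq_bigr => n _ do rewrite subrr twiddle0 expr1n.
  by rewrite sumr_const card_ord mulfV // pnatr_eq0 -lt0n.
rewrite geometric_sum_root ?mul0r //.
  rewrite -twiddleMn -(twiddle0 R D); apply: (twiddle_modD (f'%:Z - f%:Z)).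
  by rewrite add0r mulrC.
set e := ((f' + D - f) %% D)%N.
have -> : twiddle (f'%:Z - f%:Z) = omega R D ^+ e.
  rewrite -[omega R D ^+ e]/(twiddle e%:Z).
  apply: (twiddle_modD (((f' + D - f) %/ D)%N%:Z - 1)).
  rewrite /e Posz_modn -subzn; last by have := ltn_ord f; lia.
  by rewrite PoszD; ring.
apply: omegaX_neq1 => //; rewrite /e ltn_mod D_gt0 andbT.
have f_lt := ltn_ord f; have f'_lt := ltn_ord f'.
have [lt_ff'|lt_f'f|/val_inj eq_ff'] := ltngtP f f'.
- rewrite (_ : (f' + D - f = (f' - f) + D)%N); last by lia.
  by rewrite modnDr modn_small; lia.
- by rewrite modn_small; lia.
- by rewrite eq_ff' eqxx in f_neq_f'.
Qed.

Lemma DFT_circulant H : circulant H ->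
  exists d : 'rV[C]_D, W *m H = diag_mx d *m W.
Proof.
case=> c Hc; exists (\row_f \sum_(m < D) twiddle (- (f * m)%N%:Z) * c m 0).
apply/matrixP => f j; rewrite mul_diag_mx [LHS]mxE [RHS]mxE DFTE mxE.
rewrite (reindex_inj (@ordmod_addn_inj D j)) /= mulr_suml; apply: eq_bigr => m _.
rewrite Hc DFTE; have -> : ordmod (ordmod m (m + j)) (ordmod m (m + j) + D - j) = m.
  by apply: val_inj; rewrite /= addn_subn_modn // ltnW.
rewrite (_ : twiddle _ = twiddle (- (f * m)%N%:Z) * twiddle (- (f * j)%N%:Z)).
  by ring.
rewrite -twiddleD; apply: (twiddle_modD (f * ((m + j) %/ D))%N%:Z).
by rewrite /= !PoszM Posz_modn PoszD; ring.
Qed.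

End DFT.

Section GFDM.
Variable R : realType.
Local Notation C := R[i].
Variables K M : nat.
Hypothesis KM_gt0 : (0 < K * M)%N.
Local Notation D := (K * M)%N.
Local Notation twiddle := (twiddle R D).
Local Notation W := (DFT R D).

Lemma K_gt0 : (0 < K)%N. Proof. by case: K KM_gt0. Qed.
Lemma M_gt0 : (0 < M)%N. Proof. by case: M KM_gt0; rewrite ?muln0. Qed.

Lemma expj_twiddle_K (a : nat) : expj (2 * pi * a%:R / K%:R) = twiddle (a * M)%N%:Z.
Proof.
have K_neq0 : (K%:R : R) != 0 by rewrite pnatr_eq0 -lt0n K_gt0.
have M_neq0 : (M%:R : R) != 0 by rewrite pnatr_eq0 -lt0n M_gt0.
rewrite -[twiddle _]/(omega R D ^+ (a * M)) -expj_omega; congr expj.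
by rewrite !natrM; field; rewrite K_neq0 M_neq0.
Qed.

Lemma DFT_gfdm (g : 'cV[C]_D) (f c : 'I_D) :
  (W *m gfdm g) f c =
  twiddle ((((c %% K) * M)%N%:Z - f%:Z) * ((c %/ K) * K)%N%:Z) *
  (W *m g) (ordmod f (f + D - (c %% K) * M)) 0.
Proof.
rewrite mxE [(W *m g) _ _]mxE mulr_sumr.
rewrite (reindex_inj (@ordmod_addn_inj D (c %/ K * K))) /=; apply: eq_bigr => n _.
rewrite [gfdm _ _ _]mxE !DFTE expj_twiddle_K; set k := (c %% K)%N; set m := (c %/ K)%N.
have mK_le : (m * K <= D)%N by rewrite (leq_trans (leq_divM _ _)) // ltnW.
have kM_le : (k * M <= D)%N by rewrite leq_mul2r ltnW ?ltn_mod ?K_gt0 ?orbT.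
set x := ordmod n (n + m * K); set y := ordmod f (f + D - k * M).
have -> : ordmod x (x + D - m * K) = n by apply: val_inj; rewrite /= addn_subn_modn.
have twiddle_x : twiddle (- (f * x)%N%:Z) * twiddle (k * x * M)%N%:Z =
    twiddle (((k * M)%N%:Z - f%:Z) * (m * K)%N%:Z) * twiddle (- (y * n)%N%:Z).
  (* [x = n + m K] and [y = f - k M] modulo [D]. *)
  rewrite -!twiddleD; apply: (twiddle_modD
    (((n + m * K) %/ D)%N%:Z * (f%:Z - (k * M)%N%:Z)
     + (1 - ((f + D - k * M) %/ D)%N%:Z) * n%:Z)).
  rewrite /x /y /= !PoszM (Posz_modn (n + m * K)) (Posz_modn (f + D - k * M)) -subzn.
    by rewrite !PoszD !PoszM; ring.
  by have := ltn_ord f; lia.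
transitivity (twiddle (- (f * x)%N%:Z) * twiddle (k * x * M)%N%:Z / sqrtD R D * g n 0).
  by ring.
by rewrite twiddle_x; ring.
Qed.

Variables (g : 'cV[C]_D) (g1 : 'cV[C]_M) (l : nat).
Hypothesis g_support : sqrtD R D *: (W *m g) = cshift R D ^+ l *m pad K g1.

Lemma DFT_prototype_pad (y : 'I_D) :
  sqrtD R D * (W *m g) (iter l (@ordS D) y) 0 = pad K g1 y 0.
Proof.
have := congr1 (mulmx (invmx (cshift R D ^+ l))) g_support.
rewrite mulKmx ?unitarymx_unit ?unitarymxX ?cshift_unitary // => /matrixP/(_ y 0).
by rewrite (rowsel_mulmx _ _ _ (@invmx_cshiftX_rowsel R D l)) [LHS]mxE.
Qed.

Lemma DFT_prototype_vanish (y : 'I_D) :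
  (M <= y)%N -> (W *m g) (iter l (@ordS D) y) 0 = 0.
Proof.
move=> M_le_y; have := DFT_prototype_pad y.
rewrite [pad _ _ _ _]mxE insubN -?leqNgt // => /eqP.
by rewrite mulf_eq0 (negbTE (sqrtD_neq0 _ KM_gt0)) => /eqP.
Qed.

Lemma gfdm_offband_eq0 (H : 'M[C]_D) (f c : 'I_D) :
  circulant H -> (f %/ M != c %% K)%N ->
  (invmx (cshift R D ^+ l) *m W *m (H *m gfdm g)) f c = 0.
Proof.
move=> /DFT_circulant [d WH] f_neq_k.
rewrite -mulmxA (rowsel_mulmx _ _ _ (@invmx_cshiftX_rowsel R D l)) mulmxA WH -mulmxA.
rewrite mul_diag_mx mxE DFT_gfdm.
have kM_le : ((c %% K) * M <= D)%N by rewrite leq_mul2r ltnW ?ltn_mod ?K_gt0 ?orbT.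
set y := ordmod f (f + D - c %% K * M).
have -> : ordmod (iter l (@ordS D) f) (iter l (@ordS D) f + D - c %% K * M)
    = iter l (@ordS D) y.
  apply: val_inj; rewrite /= !iter_ordS_val -addnBA // !modnDml; congr (_ %% _)%N; lia.
rewrite DFT_prototype_vanish ?mulr0 //.
by apply: leq_offband_modn; rewrite ?M_gt0 ?ltn_mod ?K_gt0.
Qed.

End GFDM.

Section BlockMatrices.
Variable R : realType.
Local Notation C := R[i].

Lemma tens1mx_mul_Htilde Rn Tn D (Z : 'M[C]_D) (H : 'I_Rn -> 'I_Tn -> 'M[C]_D)
    (B : 'M[C]_D) r f t c :
  ((1%:M *t Z) *m Htilde H B) (mxtens_index (r, f)) (mxtens_index (t, c))
  = (Z *m (H r t *m B)) f c.
Proof.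
rewrite mxE sum_mxtens_index (bigD1 r) //= [X in _ + X]big1 ?addr0; last first.
  move=> a a_neq_r; apply: big1 => b _.
  by rewrite tensmxE mxE eq_sym (negbTE a_neq_r) !mul0r.
rewrite mxE; apply: eq_bigr => b _.
by rewrite tensmxE mxE eqxx mul1r mxE !mxtens_indexK.
Qed.

Lemma blkdiag_blocks K p q (Y : 'M[C]_(K * p, K * q)) :
  (forall i j, (mxtens_unindex i).1 != (mxtens_unindex j).1 -> Y i j = 0) ->
  Y = blkdiag (fun k => \matrix_(a, b) Y (mxtens_index (k, a)) (mxtens_index (k, b))).
Proof.
move=> Y_offdiag; apply/matrixP => i j; rewrite mxE.
case: eqP => [e|/eqP ne]; last exact: Y_offdiag.
by rewrite mxE {2}e -!surjective_pairing !mxtens_unindexK.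
Qed.

End BlockMatrices.

Section Factorization.
Local Open Scope sesquilinear_scope.
Variable R : realType.
Local Notation C := R[i].
Variables K M : nat.
Hypothesis KM_gt0 : (0 < K * M)%N.

Lemma Sperm_tens1_rowsel Rn :
  exists2 p, is_rowsel (castmx (eqKRM K Rn M, eqKRM K Rn M)
                                (Sperm R K Rn *t (1%:M : 'M[C]_M))) p &
    forall i, ((mxtens_unindex (p i)).2 %/ M = i %/ (M * Rn))%N.
Proof.
eexists; first exact/rowsel_cast/rowsel_tens/rowsel1/Sperm_rowsel.
have M_gt0 := M_gt0 KM_gt0; move=> i /=.
by rewrite Sperm_band_index ?ltn_mod ?divnMA // ltn_divLR // eqKRM.
Qed.

Lemma Pmat_rowsel Tn :
  exists2 p, is_rowsel (Pmat R K M Tn) p &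
    forall j, ((mxtens_unindex (p j)).2 %% K = j %/ (M * Tn))%N.
Proof.
have [pS hS bandS] := Sperm_tens1_rowsel Tn.
eexists; first exact/(rowsel_mul hS)/rowsel_tens/Sperm_rowsel/rowsel1.
move=> j; rewrite mxtens_indexK -(bandS j); set c := (mxtens_unindex (pS j)).2.
rewrite /= modnMDl modn_small // bandS.
have := leq_ltn_trans (leq0n j) (ltn_ord j); rewrite muln_gt0 => /andP[Tn_gt0 _].
by rewrite ltn_divLR ?muln_gt0 ?(M_gt0 KM_gt0) ?Tn_gt0 // [X in (_ < X)%N]eqKMR.
Qed.

Lemma Sperm_tens1_unitary Rn :
  castmx (eqKRM K Rn M, eqKRM K Rn M) (Sperm R K Rn *t (1%:M : 'M[C]_M))
    \is unitarymx.
Proof. by rewrite unitarymx_cast ?unitarymx_tens ?Sperm_unitary ?unitarymx1. Qed.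

Lemma Umat_unitary Rn l : Umat R K M Rn l \is unitarymx.
Proof.
rewrite mul_unitarymx ?Sperm_tens1_unitary ?unitarymx_tens ?unitarymx1 //.
rewrite mul_unitarymx ?DFT_unitary // invmx_unitary ?trmxC_unitary;
  by rewrite unitarymxX ?cshift_unitary.
Qed.

Lemma Pmat_unitary Tn : Pmat R K M Tn \is unitarymx.
Proof.
by rewrite mul_unitarymx ?Sperm_tens1_unitary ?unitarymx_tens
  ?unitarymx1 ?Sperm_unitary.
Qed.

Lemma Umat_Htilde_Pmat_offblock_eq0 Rn Tn (H : 'I_Rn -> 'I_Tn -> 'M[C]_(K * M))
    (g : 'cV[C]_(K * M)) (g1 : 'cV[C]_M) l
    (i : 'I_(Rn * (K * M))) (j : 'I_(Tn * (K * M))) :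
  (forall r t, circulant (H r t)) ->
  sqrtD R (K * M) *: (DFT R (K * M) *m g) = cshift R (K * M) ^+ l *m pad K g1 ->
  (i %/ (M * Rn) != j %/ (M * Tn))%N ->
  (Umat R K M Rn l *m Htilde H (gfdm g) *m (Pmat R K M Tn) ^t*) i j = 0.
Proof.
move=> Hcirc g_support i_neq_j.
have [pU hU bandU] := Sperm_tens1_rowsel Rn; have [pP hP bandP] := Pmat_rowsel Tn.
rewrite (mulmx_trC_rowsel _ _ _ hP) /Umat -mulmxA (rowsel_mulmx _ _ _ hU).
rewrite -[pU i]mxtens_unindexK -[pP j]mxtens_unindexK tens1mx_mul_Htilde.
by rewrite (gfdm_offband_eq0 KM_gt0 g_support) ?bandU ?bandP.
Qed.

End Factorization.

Theorem theorem1 (R : realType) (K M Rn Tn : nat)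
  (g : 'cV[R[i]]_(K * M))
  (H : 'I_Rn -> 'I_Tn -> 'M[R[i]]_(K * M))
  (Hcirc : forall r t, circulant (H r t))
  (g1 : 'cV[R[i]]_M) (l : nat)
  (hl : (l < K * M)%N)
  (hg : (Num.sqrt ((K * M)%:R : R))%:C%C *: (DFT R (K * M) *m g)
        = cshift R (K * M) ^+ l *m pad K g1) :
  exists F : 'I_K -> 'M[R[i]]_(M * Rn, M * Tn),
    Htilde H (gfdm g)
    = adjmx (Umat R K M Rn l)
      *m castmx (eqKMR K M Rn, eqKMR K M Tn) (blkdiag F)
      *m Pmat R K M Tn.
Proof.
have KM_gt0 : (0 < K * M)%N := leq_ltn_trans (leq0n l) hl.
pose X := Umat R K M Rn l *m Htilde H (gfdm g) *m adjmx (Pmat R K M Tn).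
pose Y := castmx (esym (eqKMR K M Rn), esym (eqKMR K M Tn)) X.
have Y_offdiag i j : (mxtens_unindex i).1 != (mxtens_unindex j).1 -> Y i j = 0.
  move=> blocks_neq; rewrite castmxE /X adjmx_trC.
  by rewrite (Umat_Htilde_Pmat_offblock_eq0 KM_gt0 Hcirc hg).
exists (fun k => \matrix_(a, b) Y (mxtens_index (k, a)) (mxtens_index (k, b))).
rewrite -blkdiag_blocks // castmxKV /X !adjmx_trC unitarymx_sandwichK //.
  exact: Umat_unitary.
exact: Pmat_unitary.
Qed.
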